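(* Let $(\mathfrak g,r)$ be a triangular Lie bialgebra with $r:\mathfrak g^*\to\mathfrak g$ invertible. For $\mu\in\mathbb R$ and $\kappa_1,\kappa_2\in\mathbb R$ with $\kappa_1\neq0$, $\kappa_2^2\neq1$, define linear maps on $\mathcal D(\mathfrak g)$ by $N_\mu(x,a^* )=(x,\mu r^{-1}(x)-a^* )$ and $N_{\kappa_1,\kappa_2}(x,a^* )=(\kappa_1r(a^* )+\kappa_2x,\ \frac{1-\kappa_2^2}{\kappa_1}r^{-1}(x)-\kappa_2a^* )$. Let $\tilde N_{\pm,\mu}=N_\mu\varphi^{-1}\pm\varphi^{-1}$ and $\tilde N_{\pm,\kappa_1,\kappa_2}=N_{\kappa_1,\kappa_2}\varphi^{-1}\pm\varphi^{-1}$, regarded as elements of $\mathcal D(\mathfrak g)\otimes\mathcal D(\mathfrak g)$. Then each of them is a solution of the CYBE in $\mathcal D(\mathfrak g)$ whose symmetric part is invariant and invertible; i.e. $(\mathcal D(\mathfrak g),\tilde N_{\pm,\mu})$ and $(\mathcal D(\mathfrak g),\tilde N_{\pm,\kappa_1,\kappa_2})$ are factorizable quasitriangular Lie bialgebras.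
   Context: $\mathfrak g$ a finite-dimensional real Lie algebra; $t\in V\otimes V$ is identified with $t:V^*\to V$ via $\langle t(a),b\rangle=\langle a\otimes b,t\rangle$. $(\mathfrak g,r)$ triangular: $r$ skew-symmetric solution of the CYBE $[r_{12},r_{13}]+[r_{12},r_{23}]+[r_{13},r_{23}]=0$ (for $r=\sum a_i\otimes b_i$: $[r_{12},r_{13}]=\sum[a_i,a_j]\otimes b_i\otimes b_j$, $[r_{12},r_{23}]=\sum a_i\otimes[b_i,a_j]\otimes b_j$, $[r_{13},r_{23}]=\sum a_i\otimes a_j\otimes[b_i,b_j]$). $\langle\mathrm{ad}^*(x)a^*,y\rangle=-\langle a^*,[x,y]\rangle$; $[a^*,b^*]_\delta=\mathrm{ad}^*(r(a^* ))b^*-\mathrm{ad}^*(r(b^* ))a^*$; $\langle\mathrm{ad}^*(a^* )x,b^*\rangle=-\langle x,[a^*,b^*]_\delta\rangle$. $\mathcal D(\mathfrak g)=\mathfrak g\oplus\mathfrak g^*$ with bracket $[(x,a^* ),(y,b^* )]=([x,y]+\mathrm{ad}^*(a^* )y-\mathrm{ad}^*(b^* )x,[a^*,b^*]_\delta+\mathrm{ad}^*(x)b^*-\mathrm{ad}^*(y)a^* )$ and form $\mathfrak B_p((x,a^* ),(y,b^* ))=\langle a^*,y\rangle+\langle x,b^*\rangle$; $\varphi$ defined by $\mathfrak B_p(X,Y)=\langle\varphi(X),Y\rangle$. A quasitriangular Lie bialgebra is factorizable if the symmetric part of its $r$-matrix is invertible as a map from the dual to the algebra. *)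

(* Finite-dimensional Lie algebras are modelled in coordinates:
   g = 'rV[R]_n with a Lie bracket br; g^# = 'rV[R]_n with the standard pairing. *)
From HB Require Import structures.
From mathcomp Require Import all_boot all_order all_algebra.
Set Implicit Arguments. Unset Strict Implicit. Unset Printing Implicit Defensive.
Import Order.TTheory GRing.Theory Num.Theory.
Local Open Scope ring_scope.

Section Defs.
Variable R : realFieldType.

Definition e (m : nat) (i : 'I_m) : 'rV[R]_m := delta_mx 0 i.

(* pairing <x, a> between g and g^# (coordinates w.r.t. dual bases) *)
Definition pair (m : nat) (x a : 'rV[R]_m) : R := \sum_i x 0 i * a 0 i.

Definition is_lie (m : nat) (br : 'rV[R]_m -> 'rV[R]_m -> 'rV[R]_m) : Prop :=
  [/\ (forall (c : R) x y z, br (c *: x + y) z = c *: br x z + br y z),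
      (forall x y, br x y = - br y x) &
      (forall x y z, br x (br y z) + br y (br z x) + br z (br x y) = 0)].

(* t : 'M_m is the tensor sum_{p,q} t p q e_p (x) e_q; as a map V^# -> V it is
   a |-> a *m t, so that <t(a), b> = <a (x) b, t>. *)
Definition cybe (m : nat) (br : 'rV[R]_m -> 'rV[R]_m -> 'rV[R]_m) (t : 'M[R]_m)
  : Prop :=
  forall i j k : 'I_m,
    \sum_p \sum_s t p j * t s k * (br (e p) (e s)) 0 i
  + \sum_q \sum_s t i q * t s k * (br (e q) (e s)) 0 j
  + \sum_q \sum_u t i q * t j u * (br (e q) (e u)) 0 k = 0.

Definition invariant (m : nat) (br : 'rV[R]_m -> 'rV[R]_m -> 'rV[R]_m)
  (s : 'M[R]_m) : Prop :=
  forall (x : 'rV[R]_m) (i j : 'I_m),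
    \sum_p s p j * (br x (e p)) 0 i + \sum_q s i q * (br x (e q)) 0 j = 0.

Definition sympart (m : nat) (t : 'M[R]_m) : 'M[R]_m := 2^-1 *: (t + t^T).

Definition factorizable (m : nat) (br : 'rV[R]_m -> 'rV[R]_m -> 'rV[R]_m)
  (t : 'M[R]_m) : Prop :=
  [/\ cybe br t, invariant br (sympart t) & sympart t \in unitmx].

Definition tensor_of (m : nat) (f : 'rV[R]_m -> 'rV[R]_m) : 'M[R]_m :=
  \matrix_(i, j) (f (e i)) 0 j.

Variable n : nat.
Variable br : 'rV[R]_n -> 'rV[R]_n -> 'rV[R]_n.
Variable r : 'M[R]_n.

(* ad^#(x) a^# in g^#:  <ad^#(x) a^#, y> = - <a^#, [x, y]> *)
Definition coad (x a : 'rV[R]_n) : 'rV[R]_n := \row_j - pair a (br x (e j)).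

Definition brd (a b : 'rV[R]_n) : 'rV[R]_n := coad (a *m r) b - coad (b *m r) a.

(* ad^#(a^#) x in g:  <ad^#(a^#) x, b^#> = - <x, [a^#, b^#]_delta> *)
Definition coadS (a x : 'rV[R]_n) : 'rV[R]_n := \row_j - pair x (brd a (e j)).

(* D(g) = g (+) g^#, an element (x, a^#) is row_mx x a^# *)
Definition brD (X Y : 'rV[R]_(n + n)) : 'rV[R]_(n + n) :=
  let x := lsubmx X in let a := rsubmx X in
  let y := lsubmx Y in let b := rsubmx Y in
  row_mx (br x y + coadS a y - coadS b x) (brd a b + coad x b - coad y a).

Definition Bp (X Y : 'rV[R]_(n + n)) : R :=
  pair (rsubmx X) (lsubmx Y) + pair (lsubmx X) (rsubmx Y).

(* matrix of phi : D -> D^#, phi(X) = X *m Phi, <phi(X), Y> = B_p(X, Y) *)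
Definition Phi : 'M[R]_(n + n) := \matrix_(i, j) Bp (e i) (e j).

(* N_mu (x, a^#) = (x, mu r^{-1}(x) - a^#),  with r(a^#) = a^# *m r *)
Definition N_mu (mu : R) (X : 'rV[R]_(n + n)) : 'rV[R]_(n + n) :=
  row_mx (lsubmx X) (mu *: (lsubmx X *m invmx r) - rsubmx X).

Definition N_kk (k1 k2 : R) (X : 'rV[R]_(n + n)) : 'rV[R]_(n + n) :=
  row_mx (k1 *: (rsubmx X *m r) + k2 *: lsubmx X)
         (((1 - k2 ^+ 2) / k1) *: (lsubmx X *m invmx r) - k2 *: rsubmx X).

Definition tildeN (N : 'rV[R]_(n + n) -> 'rV[R]_(n + n)) (s : R)
  : 'M[R]_(n + n) :=
  tensor_of (fun a => N (a *m invmx Phi) + s *: (a *m invmx Phi)).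

End Defs.

(* The argument has three layers.
   1. Criterion: on a space with a skew bracket B and an invariant symmetric
      form whose Gram matrix P is an involution, every form-skew operator M
      satisfying the modified CYBE [MX, MY] = M([MX, Y] + [X, MY]) - [X, Y]
      yields a solution t = P^-1 (M +- 1) of the CYBE whose symmetric part +-P
      is invariant and invertible.  The modified CYBE holds for every linear
      involution whose eigenspaces for 1 and -1 are subalgebras.
   2. The double: brD is a skew bracket on D(g) = g (+) g^# for which B_p is
      invariant, and the Gram matrix Phi of B_p is the flip (x, a) |-> (a, x).
   3. Subalgebras: the CYBE for the skew invertible r says that rho = r^-1 is
      a 2-cocycle, so every graph {(x, c rho x)} is a subalgebra of D(g), and
      so is g^#.  N_mu has eigenspaces graph((mu/2) rho) and g^#, N_{k1,k2}
      has eigenspaces graph(((+-1 - k2)/k1) rho); both are skew for B_p.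
   The theorem follows by feeding 3 and 2 into 1. *)

From Pilot Require Import Defs.
From HB Require Import structures.
From mathcomp Require Import all_boot all_order all_algebra ring.
Import Order.TTheory GRing.Theory Num.Theory.
Local Open Scope ring_scope.
Set Implicit Arguments. Unset Strict Implicit. Unset Printing Implicit Defensive.

Section RowVectors.
Variable R : realFieldType.
Implicit Types (c : R).

Section LinearMaps.
Variables (m k : nat) (f : 'rV[R]_m -> 'rV[R]_k).
Hypothesis f_lin : linear f.

Lemma lin_map0 : f 0 = 0.
Proof.
have := f_lin 1 0 0; rewrite !scale1r addr0 => f00.
by apply: (@addrI _ (f 0)); rewrite addr0 -f00.
Qed.
Lemma lin_mapD u v : f (u + v) = f u + f v.
Proof. by have := f_lin 1 u v; rewrite !scale1r. Qed.
Lemma lin_mapZ c u : f (c *: u) = c *: f u.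
Proof. by rewrite -[c *: u]addr0 f_lin lin_map0 addr0. Qed.
Lemma lin_mapN u : f (- u) = - f u.
Proof. by rewrite -scaleN1r lin_mapZ scaleN1r. Qed.
Lemma lin_mapB u v : f (u - v) = f u - f v.
Proof. by rewrite lin_mapD lin_mapN. Qed.

Lemma lin_expand u : f u = \sum_i u 0 i *: f 'e_i.
Proof.
rewrite {1}(row_sum_delta u); elim/big_rec2: _ => [|i y1 y2 _ IH].
  exact: lin_map0.
by rewrite f_lin IH.
Qed.
End LinearMaps.

Lemma e_mul m k (i : 'I_m) (A : 'M[R]_(m, k)) j : (('e_i : 'rV_m) *m A) 0 j = A i j.
Proof. by rewrite -rowE mxE. Qed.

Lemma lin_tensor m (f : 'rV[R]_m -> 'rV[R]_m) u : linear f -> f u = u *m tensor_of f.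
Proof.
move=> f_lin; apply/rowP=> j; rewrite (lin_expand f_lin u) summxE !mxE.
by apply: eq_bigr => i _; rewrite !mxE.
Qed.

Lemma tensor_ofE m (A : 'M[R]_m) f : (forall a, f a = a *m A) -> tensor_of f = A.
Proof. by move=> fA; apply/matrixP=> i j; rewrite mxE fA e_mul. Qed.

Section Pairing.
Variable m : nat.
Implicit Types x y a b : 'rV[R]_m.

Lemma pairE x a : pair x a = (x *m a^T) 0 0.
Proof. by rewrite /pair !mxE; apply: eq_bigr => i _; rewrite mxE. Qed.
Lemma pairC x a : pair x a = pair a x.
Proof. by apply: eq_bigr => i _; exact: mulrC. Qed.
Lemma pairDl x y a : pair (x + y) a = pair x a + pair y a.
Proof. by rewrite !pairE mulmxDl mxE. Qed.
Lemma pairZl c x a : pair (c *: x) a = c * pair x a.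
Proof. by rewrite !pairE -scalemxAl mxE. Qed.
Lemma pairNl x a : pair (- x) a = - pair x a.
Proof. by rewrite !pairE mulNmx mxE. Qed.
Lemma pairBl x y a : pair (x - y) a = pair x a - pair y a.
Proof. by rewrite pairDl pairNl. Qed.
Lemma pair0l a : pair 0 a = 0.
Proof. by rewrite pairE mul0mx mxE. Qed.
Lemma pairDr x a b : pair x (a + b) = pair x a + pair x b.
Proof. by rewrite pairC pairDl !(pairC x). Qed.
Lemma pairZr c x a : pair x (c *: a) = c * pair x a.
Proof. by rewrite pairC pairZl pairC. Qed.
Lemma pairNr x a : pair x (- a) = - pair x a.
Proof. by rewrite pairC pairNl pairC. Qed.
Lemma pairBr x a b : pair x (a - b) = pair x a - pair x b.
Proof. by rewrite pairDr pairNr. Qed.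
Lemma pair0r a : pair a 0 = 0.
Proof. by rewrite pairC pair0l. Qed.

Lemma pair_e x i : pair x 'e_i = x 0 i.
Proof.
rewrite /pair (bigD1 i) //= mxE !eqxx mulr1 big1 ?addr0 // => j /negbTE ji.
by rewrite mxE ji andbF mulr0.
Qed.

Lemma pair_mx x (A : 'M[R]_m) y : pair (x *m A) y = pair x (y *m A^T).
Proof. by rewrite !pairE trmx_mul trmxK mulmxA. Qed.

Lemma pair_ext x y : (forall j, pair x 'e_j = pair y 'e_j) -> x = y.
Proof. by move=> xy; apply/rowP => j; rewrite -!pair_e xy. Qed.

Lemma pair_sumr x I (s : seq I) (P : pred I) (c : I -> R) (w : I -> 'rV[R]_m) :
  pair x (\sum_(i <- s | P i) c i *: w i) = \sum_(i <- s | P i) c i * pair x (w i).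
Proof.
elim/big_rec2: _ => [|i y1 y2 _ IH]; first exact: pair0r.
by rewrite pairDr pairZr IH.
Qed.

Lemma pair_row a (F : 'rV[R]_m -> 'rV[R]_m) y : linear F ->
  pair (\row_j pair a (F 'e_j)) y = pair a (F y).
Proof.
move=> F_lin; rewrite (lin_expand F_lin y) pair_sumr /pair.
by apply: eq_bigr => j _; rewrite mxE mulrC.
Qed.
End Pairing.

Definition pair_lin := (pairDl, pairBl, pairNl, pairZl, pair0l,
                        pairDr, pairBr, pairNr, pairZr, pair0r).

Lemma linform_eq0 m (g : 'rV[R]_m -> R) :
  (forall c u v, g (c *: u + v) = c * g u + g v) ->
  (forall i, g 'e_i = 0) -> forall u, g u = 0.
Proof.
move=> g_lin g_e u; have g0 : g 0 = 0.
  have := g_lin 1 0 0; rewrite scale1r addr0 mul1r => g00.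
  by apply: (@addrI _ (g 0)); rewrite addr0 -g00.
rewrite (row_sum_delta u); elim/big_rec: _ => [//|i x _ gx].
by rewrite g_lin gx g_e mulr0 addr0.
Qed.

Lemma eq_lincomb (k a b lhs rhs : R) :
  a = b -> lhs - rhs = k * (a - b) -> lhs = rhs.
Proof. by move=> -> /eqP; rewrite subrr mulr0 subr_eq0 => /eqP. Qed.

Lemma mulmxZl m k l c (A : 'M[R]_(m, k)) (C : 'M[R]_(k, l)) :
  (c *: A) *m C = c *: (A *m C).
Proof. exact: esym (scalemxAl c A C). Qed.

Definition mulmx_lin := (mulmxDl, mulmxBl, mulNmx, mul0mx, mulmxZl).

Ltac by_coords := apply: pair_ext => ?; rewrite ?mulmx_lin ?pair_lin; ring.

Section Brackets.
Variables (m : nat) (B : 'rV[R]_m -> 'rV[R]_m -> 'rV[R]_m).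
Hypothesis B_linl : forall c x y z, B (c *: x + y) z = c *: B x z + B y z.
Hypothesis B_skew : forall x y, B x y = - B y x.

Lemma bracket_linl z : linear (B^~ z). Proof. by move=> c x y; apply: B_linl. Qed.
Lemma bracket_linr x : linear (B x).
Proof. by move=> c u v; rewrite B_skew B_linl opprD -scalerN -!B_skew. Qed.

Lemma brDl x y z : B (x + y) z = B x z + B y z. Proof. exact: (lin_mapD (bracket_linl z)). Qed.
Lemma brZl c x z : B (c *: x) z = c *: B x z. Proof. exact: (lin_mapZ (bracket_linl z)). Qed.
Lemma brNl x z : B (- x) z = - B x z. Proof. exact: (lin_mapN (bracket_linl z)). Qed.
Lemma brBl x y z : B (x - y) z = B x z - B y z. Proof. exact: (lin_mapB (bracket_linl z)). Qed.
Lemma br0l z : B 0 z = 0. Proof. exact: (lin_map0 (bracket_linl z)). Qed.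
Lemma brDr x y z : B z (x + y) = B z x + B z y. Proof. exact: (lin_mapD (bracket_linr z)). Qed.
Lemma brZr c x z : B z (c *: x) = c *: B z x. Proof. exact: (lin_mapZ (bracket_linr z)). Qed.
Lemma brNr x z : B z (- x) = - B z x. Proof. exact: (lin_mapN (bracket_linr z)). Qed.
Lemma brBr x y z : B z (x - y) = B z x - B z y. Proof. exact: (lin_mapB (bracket_linr z)). Qed.
Lemma br0r z : B z 0 = 0. Proof. exact: (lin_map0 (bracket_linr z)). Qed.

Definition bracket_lin := (brDl, brZl, brNl, brBl, br0l, brDr, brZr, brNr, brBr, br0r).

Lemma bracket_coord u v i :
  (B u v) 0 i = \sum_p \sum_q u 0 p * v 0 q * (B 'e_p 'e_q) 0 i.
Proof.
rewrite (lin_expand (bracket_linl v) u) summxE; apply: eq_bigr => p _.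
rewrite mxE (lin_expand (bracket_linr 'e_p) v) summxE mulr_sumr.
by apply: eq_bigr => q _; rewrite mxE mulrA.
Qed.

Lemma bracket_coordr x v i : (B x v) 0 i = \sum_p v 0 p * (B x 'e_p) 0 i.
Proof.
by rewrite (lin_expand (bracket_linr x) v) summxE; apply: eq_bigr => p _; rewrite mxE.
Qed.

Lemma cybeE t : cybe B t <-> forall i j k,
  (B ('e_j *m t^T) ('e_k *m t^T)) 0 i + (B ('e_i *m t) ('e_k *m t^T)) 0 j
  + (B ('e_i *m t) ('e_j *m t)) 0 k = 0.
Proof.
suff eq_ijk i j k : (B ('e_j *m t^T) ('e_k *m t^T)) 0 i
    + (B ('e_i *m t) ('e_k *m t^T)) 0 j + (B ('e_i *m t) ('e_j *m t)) 0 k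
  = \sum_p \sum_q t p j * t q k * (B (e R p) (e R q)) 0 i
  + \sum_p \sum_q t i p * t q k * (B (e R p) (e R q)) 0 j
  + \sum_p \sum_q t i p * t j q * (B (e R p) (e R q)) 0 k.
  by split => tP i j k; [rewrite eq_ijk | rewrite -eq_ijk]; exact: tP.
rewrite !bracket_coord.
by congr (_ + _ + _); apply: eq_bigr => p _; apply: eq_bigr => q _; rewrite !e_mul ?mxE.
Qed.

Section ModifiedCYBE.
Variable N : 'rV[R]_m -> 'rV[R]_m.
Hypothesis N_lin : linear N.
Hypothesis N_invol : forall X, N (N X) = X.
Hypothesis N_plus : forall X Y, N X = X -> N Y = Y -> N (B X Y) = B X Y.
Hypothesis N_minus : forall X Y, N X = - X -> N Y = - Y -> N (B X Y) = - B X Y.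

Let defect X Y := B (N X) (N Y) - N (B (N X) Y + B X (N Y)) + B X Y.

Let N_linE := (lin_mapD N_lin, lin_mapN N_lin, lin_mapB N_lin, lin_map0 N_lin).

Let defectDl X1 X2 Y : defect (X1 + X2) Y = defect X1 Y + defect X2 Y.
Proof. rewrite /defect !(N_linE, bracket_lin); by_coords. Qed.
Let defectDr X Y1 Y2 : defect X (Y1 + Y2) = defect X Y1 + defect X Y2.
Proof. rewrite /defect !(N_linE, bracket_lin); by_coords. Qed.

Let defect_pp X Y : N X = X -> N Y = Y -> defect X Y = 0.
Proof. by move=> NX NY; rewrite /defect NX NY N_linE N_plus //; by_coords. Qed.
Let defect_mm X Y : N X = - X -> N Y = - Y -> defect X Y = 0.
Proof.
by move=> NX NY; rewrite /defect NX NY !(N_linE, bracket_lin) N_minus //; by_coords.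
Qed.
Let defect_pm X Y : N X = X -> N Y = - Y -> defect X Y = 0.
Proof. by move=> NX NY; rewrite /defect NX NY !(N_linE, bracket_lin); by_coords. Qed.
Let defect_mp X Y : N X = - X -> N Y = Y -> defect X Y = 0.
Proof. by move=> NX NY; rewrite /defect NX NY !(N_linE, bracket_lin); by_coords. Qed.

Let eigen_split X : X = 2^-1 *: (X + N X) + 2^-1 *: (X - N X).
Proof.
rewrite -scalerDr addrACA subrr addr0 -mulr2n -scaler_nat scalerA.
by rewrite mulVf ?scale1r // pnatr_eq0.
Qed.
Let N_plus_part X : N (2^-1 *: (X + N X)) = 2^-1 *: (X + N X).
Proof. by rewrite (lin_mapZ N_lin) (lin_mapD N_lin) N_invol addrC. Qed.
Let N_minus_part X : N (2^-1 *: (X - N X)) = - (2^-1 *: (X - N X)).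
Proof. by rewrite (lin_mapZ N_lin) (lin_mapB N_lin) N_invol -scalerN opprB. Qed.

Lemma mcybe_of_eigen X Y : B (N X) (N Y) = N (B (N X) Y + B X (N Y)) - B X Y.
Proof.
suff : defect X Y = 0.
  by rewrite /defect addrAC => /eqP; rewrite subr_eq0 => /eqP <-; rewrite addrK.
rewrite (eigen_split X) (eigen_split Y) !defectDl !defectDr.
rewrite (defect_pp (N_plus_part X) (N_plus_part Y)).
rewrite (defect_pm (N_plus_part X) (N_minus_part Y)).
rewrite (defect_mp (N_minus_part X) (N_plus_part Y)).
by rewrite (defect_mm (N_minus_part X) (N_minus_part Y)) !addr0.
Qed.
End ModifiedCYBE.
End Brackets.

Definition gram_form m (P : 'M[R]_m) (X Y : 'rV[R]_m) : R := pair (X *m P) Y.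

Section Criterion.
Variables (m : nat) (B : 'rV[R]_m -> 'rV[R]_m -> 'rV[R]_m) (P M : 'M[R]_m) (s : R).
Hypothesis B_linl : forall c x y z, B (c *: x + y) z = c *: B x z + B y z.
Hypothesis B_skew : forall x y, B x y = - B y x.
Hypothesis P_sym : P^T = P.
Hypothesis P_invol : P *m P = 1%:M.
Local Notation bp := (gram_form P).
Hypothesis bp_invariant : forall X Y Z, bp (B X Y) Z + bp Y (B X Z) = 0.
Hypothesis M_skew : forall X Y, bp (X *m M) Y = - bp X (Y *m M).
Hypothesis M_mcybe : forall X Y,
  B (X *m M) (Y *m M) = (B (X *m M) Y + B X (Y *m M)) *m M - B X Y.
Hypothesis s_sign : s = 1 \/ s = -1.

Let t := invmx P *m (M + s%:M).

Lemma formC X Y : bp X Y = bp Y X.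
Proof. by rewrite /gram_form pair_mx P_sym pairC. Qed.
Lemma formBl X Y Z : bp (X - Y) Z = bp X Z - bp Y Z.
Proof. by rewrite /gram_form mulmxBl pairBl. Qed.
Lemma formZl c X Z : bp (c *: X) Z = c * bp X Z.
Proof. by rewrite /gram_form -scalemxAl pairZl. Qed.
Lemma formDr X Y Z : bp Z (X + Y) = bp Z X + bp Z Y.
Proof. by rewrite /gram_form pairDr. Qed.
Lemma formZr c X Z : bp Z (c *: X) = c * bp Z X.
Proof. by rewrite /gram_form pairZr. Qed.

(* coordinates are read off by the form, [P] being its own inverse *)
Lemma coord_form (U : 'rV[R]_m) i : U 0 i = bp U ('e_i *m P).
Proof. by rewrite /gram_form pair_mx P_sym -mulmxA P_invol mulmx1 pair_e. Qed.

Lemma P_unit : P \in unitmx. Proof. by case: (mulmx1_unit P_invol). Qed.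
Lemma invmx_P : invmx P = P.
Proof. by rewrite -[invmx P]mulmx1 -P_invol mulmxA mulVmx ?P_unit // mul1mx. Qed.

(* [t] maps the form-dual of a vector [X] to [X M + s X]; its transpose maps it
   to [s X - X M] *)
Let Rp (X : 'rV[R]_m) := X *m M + s *: X.
Let Rm (X : 'rV[R]_m) := s *: X - X *m M.

Lemma Rm_adjoint U W : bp (Rm U) W = bp U (Rp W).
Proof. by rewrite formBl formZl M_skew formDr formZr; ring. Qed.

Lemma t_row i : 'e_i *m t = Rp ('e_i *m P).
Proof. by rewrite /t invmx_P mulmxA mulmxDr mul_mx_scalar. Qed.

Lemma t_col i : 'e_i *m t^T = Rm ('e_i *m P).
Proof.
apply/rowP => j; rewrite e_mul mxE -e_mul t_row coord_form formC -Rm_adjoint.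
by rewrite -coord_form.
Qed.

Lemma Rp_bracket X Y : B (Rp X) (Rp Y) = Rp (B (Rm Y) X) + Rp (B (Rp X) Y).
Proof.
rewrite /Rp /Rm !(bracket_lin B_linl B_skew) M_mcybe (B_skew Y X) (B_skew (Y *m M) X).
by case: s_sign => ->; by_coords.
Qed.

Lemma cybe_t : cybe B t.
Proof.
apply/(cybeE B_linl B_skew) => i j k; rewrite !t_row !t_col !coord_form.
set X := 'e_i *m P; set Y := 'e_j *m P; set Z := 'e_k *m P.
have h1 := bp_invariant (Rm Y) (Rm Z) X; rewrite Rm_adjoint in h1.
have h2 := bp_invariant (Rp X) (Rm Z) Y; rewrite Rm_adjoint in h2.
rewrite (formC (B (Rp X) (Rp Y))) Rp_bracket formDr.
by have := congr2 +%R h1 h2; rewrite addr0 => <-; ring.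
Qed.

Lemma sympart_t : sympart t = s *: P.
Proof.
apply/row_matrixP => i; rewrite !rowE /sympart -!scalemxAr mulmxDr t_row t_col.
by apply: pair_ext => j; rewrite ?pair_lin; field.
Qed.

Lemma invariant_sympart_t : Defs.invariant B (sympart t).
Proof.
rewrite sympart_t => x i j; rewrite /e.
have P_symE a b : P a b = P b a by rewrite -{1}P_sym mxE.
have -> : \sum_p (s *: P) p j * (B x 'e_p) 0 i = (B x ('e_j *m (s *: P))) 0 i.
  by rewrite (bracket_coordr B_linl B_skew); apply: eq_bigr => p _; rewrite e_mul !mxE P_symE.
have -> : \sum_q (s *: P) i q * (B x 'e_q) 0 j = (B x ('e_i *m (s *: P))) 0 j.
  by rewrite (bracket_coordr B_linl B_skew); apply: eq_bigr => q _; rewrite e_mul.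
rewrite -!scalemxAr !(brZr B_linl B_skew) !mxE (coord_form _ i) (coord_form _ j).
by rewrite -mulrDr (formC (B x ('e_i *m P))) bp_invariant mulr0.
Qed.

Lemma sympart_t_unit : sympart t \in unitmx.
Proof.
rewrite sympart_t unitmxZ ?P_unit // unitfE.
by case: s_sign => ->; rewrite ?oppr_eq0 oner_neq0.
Qed.

Lemma factorizable_criterion : factorizable B (invmx P *m (M + s%:M)).
Proof. by split; [exact: cybe_t | exact: invariant_sympart_t | exact: sympart_t_unit]. Qed.
End Criterion.

(* The double [D(g)] of the bialgebra [(g, r)], with its bracket [brD] and the
   form [Bp].  No identity on [r] is needed to see that [brD] is a skew
   bracket for which [Bp] is invariant. *)
Section Double.
Variables (n : nat) (br : 'rV[R]_n -> 'rV[R]_n -> 'rV[R]_n) (r : 'M[R]_n).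
Hypothesis br_linl : forall c x y z, br (c *: x + y) z = c *: br x z + br y z.
Hypothesis br_skew : forall x y, br x y = - br y x.
Implicit Types x y z a b : 'rV[R]_n.
Local Notation coad := (coad br).
Local Notation brd := (brd br r).
Local Notation coadS := (coadS br r).
Local Notation brD := (brD br r).

Lemma coad_pair x a y : pair (coad x a) y = - pair a (br x y).
Proof.
have -> : coad x a = - \row_j pair a (br x 'e_j) by apply/rowP => j; rewrite !mxE.
by rewrite pairNl pair_row //; exact: bracket_linr.
Qed.
Lemma coad_pairr x a y : pair y (coad x a) = - pair a (br x y).
Proof. by rewrite pairC coad_pair. Qed.

Lemma brdE a b : brd a b = coad (a *m r) b - coad (b *m r) a. Proof. by []. Qed.

Let expandE := (pair_lin, coad_pair, coad_pairr, brdE, bracket_lin br_linl br_skew,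
                mulmx_lin).

Lemma brd_linr a : linear (brd a).
Proof. by move=> c u v; apply: pair_ext => j; rewrite !expandE; ring. Qed.

Lemma coadS_pair a x b : pair (coadS a x) b = - pair x (brd a b).
Proof.
have -> : coadS a x = - \row_j pair x (brd a 'e_j) by apply/rowP => j; rewrite !mxE.
by rewrite pairNl pair_row //; exact: brd_linr.
Qed.
Lemma coadS_pairr a x b : pair b (coadS a x) = - pair x (brd a b).
Proof. by rewrite pairC coadS_pair. Qed.

Let expandSE := (coadS_pair, coadS_pairr, expandE).

Lemma brD_linl c X Y Z : brD (c *: X + Y) Z = c *: brD X Z + brD Y Z.
Proof.
rewrite /brD /= !linearP /= scale_row_mx add_row_mx.
by congr row_mx; apply: pair_ext => j; rewrite !expandSE; ring.
Qed.

Lemma brD_skew X Y : brD X Y = - brD Y X.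
Proof.
rewrite /brD /= opp_row_mx.
congr row_mx; apply: pair_ext => j; last by rewrite !expandSE; ring.
by rewrite (br_skew (lsubmx Y)) !expandSE; ring.
Qed.

(* [Bp X Y] pairs [X] with the flip [(x, a) |-> (a, x)] of [Y], so the Gram
   matrix [Phi] of [Bp] is a symmetric involution *)
Definition flip (X : 'rV[R]_(n + n)) := row_mx (rsubmx X) (lsubmx X).

Lemma flip_lin : linear flip.
Proof. by move=> c u v; rewrite /flip !linearP /= scale_row_mx add_row_mx. Qed.
Lemma flipK X : flip (flip X) = X.
Proof. by rewrite /flip row_mxKl row_mxKr hsubmxK. Qed.

Lemma pair_split (U V : 'rV[R]_(n + n)) :
  pair U V = pair (lsubmx U) (lsubmx V) + pair (rsubmx U) (rsubmx V).
Proof. by rewrite /pair big_split_ord /=; congr (_ + _); apply: eq_bigr => i _; rewrite !mxE. Qed.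

Lemma Bp_flip X Y : Bp X Y = pair (flip X) Y.
Proof. by rewrite /Bp pair_split /flip row_mxKl row_mxKr. Qed.
Lemma Phi_flip X : X *m Phi R n = flip X.
Proof.
have -> : Phi R n = tensor_of flip.
  by apply/matrixP => i j; rewrite [LHS]mxE [RHS]mxE Bp_flip pair_e.
by rewrite -(lin_tensor _ flip_lin).
Qed.
Lemma form_Phi X Y : gram_form (Phi R n) X Y = Bp X Y.
Proof. by rewrite /gram_form Phi_flip Bp_flip. Qed.

Lemma Phi_sym : (Phi R n)^T = Phi R n.
Proof. by apply/matrixP => i j; rewrite !mxE /Bp addrC; congr (_ + _); exact: pairC. Qed.
Lemma Phi_invol : Phi R n *m Phi R n = 1%:M.
Proof. by apply/row_matrixP => i; rewrite row_mul rowE !Phi_flip flipK rowE mulmx1. Qed.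

Lemma Bp_invariant X Y Z : Bp (brD X Y) Z + Bp Y (brD X Z) = 0.
Proof.
rewrite /Bp /brD /= !row_mxKl !row_mxKr !expandSE.
rewrite ![pair (br _ _) _]pairC (br_skew (lsubmx Z) (lsubmx Y)) !pair_lin; ring.
Qed.

Lemma tildeNE (N : 'rV[R]_(n + n) -> 'rV[R]_(n + n)) s : linear N ->
  tildeN N s = invmx (Phi R n) *m (tensor_of N + s%:M).
Proof.
move=> N_lin; apply: tensor_ofE => a.
by rewrite !mulmxDr mul_mx_scalar mulmxA -scalemxAr -(lin_tensor _ N_lin).
Qed.

Lemma factorizable_of_involution (N : 'rV[R]_(n + n) -> 'rV[R]_(n + n)) s :
  linear N -> (forall X, N (N X) = X) ->
  (forall X Y, N X = X -> N Y = Y -> N (brD X Y) = brD X Y) ->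
  (forall X Y, N X = - X -> N Y = - Y -> N (brD X Y) = - brD X Y) ->
  (forall X Y, Bp (N X) Y = - Bp X (N Y)) ->
  s = 1 \/ s = -1 ->
  factorizable brD (tildeN N s).
Proof.
move=> N_lin N_invol N_plus N_minus N_skew s_sign; rewrite tildeNE //.
have N_mx X : N X = X *m tensor_of N by exact: lin_tensor.
apply: factorizable_criterion s_sign.
- exact: brD_linl.
- exact: brD_skew.
- exact: Phi_sym.
- exact: Phi_invol.
- by move=> X Y Z; rewrite !form_Phi Bp_invariant.
- by move=> X Y; rewrite !form_Phi -!N_mx N_skew.
- move=> X Y; rewrite -!N_mx.
  exact: (mcybe_of_eigen brD_linl brD_skew N_lin N_invol N_plus N_minus).
Qed.

Lemma dual_bracket a b : brD (row_mx 0 a) (row_mx 0 b) = row_mx 0 (brd a b).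
Proof.
rewrite /brD /= !row_mxKl !row_mxKr.
by congr row_mx; apply: pair_ext => j; rewrite !expandSE; ring.
Qed.

Lemma coadZ x c a : coad x (c *: a) = c *: coad x a.
Proof. by apply: pair_ext => j; rewrite !expandE; ring. Qed.
Lemma brdZ c d a b : brd (c *: a) (d *: b) = (c * d) *: brd a b.
Proof. by apply: pair_ext => j; rewrite !expandE; ring. Qed.
Lemma coadSZ c a x : coadS (c *: a) x = c *: coadS a x.
Proof. by apply: pair_ext => j; rewrite !expandSE; ring. Qed.

Section Graph.
Hypothesis r_skew : r^T = - r.
Hypothesis r_cybe : cybe br r.
Hypothesis r_unit : r \in unitmx.
Local Notation rho x := (x *m invmx r).

Lemma rhoK x : rho x *m r = x. Proof. exact: mulmxKV. Qed.
Lemma rhoK' x : rho (x *m r) = x. Proof. exact: mulmxK. Qed.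

Lemma pair_r x y : pair (x *m r) y = - pair x (y *m r).
Proof. by rewrite pair_mx r_skew mulmxN pairNr. Qed.
Lemma pair_rho x y : pair (rho x) y = - pair x (rho y).
Proof.
have rhoT : (invmx r)^T = - invmx r.
  rewrite trmx_inv r_skew -scaleN1r invmxZ ?invrN1 ?scaleN1r //.
  by rewrite -scaleN1r unitmxZ // unitrN1.
by rewrite pair_mx rhoT mulmxN pairNr.
Qed.

(* The CYBE for the skew tensor [r] says that the trilinear form [cyc] below
   vanishes on basis vectors, hence everywhere; at [rho]-images this states
   that [rho] is a 2-cocycle. *)
Lemma rho_cocycle x y w :
  pair (br y w) (rho x) - pair (br x w) (rho y) + pair (br x y) (rho w) = 0.
Proof.
pose cyc a b d := pair (br (b *m r) (d *m r)) a - pair (br (a *m r) (d *m r)) b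
  + pair (br (a *m r) (b *m r)) d.
have cyc_e i j k : cyc 'e_i 'e_j 'e_k = 0.
  have := (cybeE br_linl br_skew r).1 r_cybe i j k.
  by rewrite r_skew !mulmxN !(bracket_lin br_linl br_skew) opprK !mxE /cyc !pair_e.
have cyc0 a b d : cyc a b d = 0.
  move: a; apply: linform_eq0 => [c u v|i]; first by rewrite /cyc !expandE; ring.
  move: b; apply: linform_eq0 => [c u v|j]; first by rewrite /cyc !expandE; ring.
  move: d; apply: linform_eq0 => [c u v|k]; first by rewrite /cyc !expandE; ring.
  exact: cyc_e.
by have := cyc0 (rho x) (rho y) (rho w); rewrite /cyc !rhoK.
Qed.

Lemma rho_bracket x y : coad x (rho y) - coad y (rho x) = rho (br x y).
Proof.
apply: pair_ext => j; have := rho_cocycle x y 'e_j.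
rewrite pairBl !coad_pair ![pair (rho _) (br _ _)]pairC pair_rho => cocyc.
by apply: (eq_lincomb (k := 1) cocyc); ring.
Qed.

Lemma coadS_expand a y : coadS a y = br (a *m r) y + coad y a *m r.
Proof.
apply: pair_ext => j.
rewrite coadS_pair brdE pairBr !coad_pairr pairDl pair_r coad_pair.
by rewrite ![pair (br _ _) _]pairC (br_skew y) pairNr; ring.
Qed.

Lemma coadS_rho x y : coadS (rho x) y - coadS (rho y) x = br x y.
Proof.
have cocyc : coad x (rho y) *m r - coad y (rho x) *m r = br x y.
  by rewrite -mulmxBl rho_bracket rhoK.
by rewrite !coadS_expand !rhoK (br_skew y x) -{2}cocyc; by_coords.
Qed.

Lemma brd_rho x y : brd (rho x) (rho y) = rho (br x y).
Proof. by rewrite brdE !rhoK rho_bracket. Qed.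

Definition graph (c : R) x : 'rV[R]_(n + n) := row_mx x (c *: rho x).

Lemma graph_closed c x y :
  brD (graph c x) (graph c y) = graph c ((1 + c) *: br x y).
Proof.
rewrite /brD /graph /= !row_mxKl !row_mxKr; congr row_mx.
  by rewrite !coadSZ -addrA -scalerBr coadS_rho scalerDl scale1r.
rewrite brdZ !coadZ brd_rho mulmxZl -rho_bracket; by_coords.
Qed.

Section Nmu.
Variable mu : R.
Local Notation Nm := (N_mu r mu).

Lemma N_mu_lin : linear Nm.
Proof.
move=> c X Y; rewrite /N_mu !linearP /= scale_row_mx add_row_mx.
by congr row_mx; by_coords.
Qed.

Lemma N_mu_invol X : Nm (Nm X) = X.
Proof. by rewrite /N_mu row_mxKl row_mxKr -[RHS]hsubmxK; congr row_mx; by_coords. Qed.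

Lemma N_mu_skew X Y : Bp (Nm X) Y = - Bp X (Nm Y).
Proof. by rewrite /Bp /N_mu !row_mxKl !row_mxKr !pair_lin pair_rho; ring. Qed.

Lemma N_mu_graph z : Nm (graph (mu / 2) z) = graph (mu / 2) z.
Proof.
rewrite /N_mu /graph row_mxKl row_mxKr; congr row_mx.
by apply: pair_ext => j; rewrite !pair_lin; field.
Qed.

Lemma N_mu_eigen_plus X : Nm X = X -> X = graph (mu / 2) (lsubmx X).
Proof.
move/(congr1 rsubmx); rewrite /N_mu row_mxKr => NX.
rewrite -[LHS]hsubmxK /graph; congr row_mx.
apply: (@scalerI _ _ 2%:R); first by rewrite pnatr_eq0.
by rewrite scalerA mulrC divfK ?pnatr_eq0 // scaler_nat mulr2n -{1}NX subrK.
Qed.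

Lemma N_mu_eigen_minus X : Nm X = - X -> X = row_mx 0 (rsubmx X).
Proof.
move/(congr1 lsubmx); rewrite /N_mu row_mxKl linearN /= => NX.
rewrite -[LHS]hsubmxK; congr row_mx; apply/eqP; move/eqP: NX.
by rewrite -subr_eq0 opprK -mulr2n -scaler_nat scaler_eq0 pnatr_eq0.
Qed.

Lemma N_mu_plus X Y : Nm X = X -> Nm Y = Y -> Nm (brD X Y) = brD X Y.
Proof.
by move=> /N_mu_eigen_plus -> /N_mu_eigen_plus ->; rewrite graph_closed N_mu_graph.
Qed.

Lemma N_mu_minus X Y : Nm X = - X -> Nm Y = - Y -> Nm (brD X Y) = - brD X Y.
Proof.
move=> /N_mu_eigen_minus -> /N_mu_eigen_minus ->; rewrite dual_bracket.
by rewrite /N_mu row_mxKl row_mxKr mul0mx scaler0 sub0r opp_row_mx oppr0.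
Qed.

Lemma factorizable_N_mu s : s = 1 \/ s = -1 -> factorizable brD (tildeN Nm s).
Proof.
move=> s_sign; apply: factorizable_of_involution s_sign.
- exact: N_mu_lin.
- exact: N_mu_invol.
- exact: N_mu_plus.
- exact: N_mu_minus.
- exact: N_mu_skew.
Qed.
End Nmu.

Section Nkk.
Variables k1 k2 : R.
Hypothesis k1_neq0 : k1 != 0.
Local Notation Nk := (N_kk r k1 k2).

Lemma N_kk_lin : linear Nk.
Proof.
move=> c X Y; rewrite /N_kk !linearP /= scale_row_mx add_row_mx.
by congr row_mx; by_coords.
Qed.

Lemma N_kk_invol X : Nk (Nk X) = X.
Proof.
rewrite /N_kk row_mxKl row_mxKr -[RHS]hsubmxK.
by congr row_mx; rewrite ?mulmx_lin ?rhoK ?rhoK'; apply: pair_ext => j; rewrite !pair_lin; field.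
Qed.

Lemma N_kk_skew X Y : Bp (Nk X) Y = - Bp X (Nk Y).
Proof. by rewrite /Bp /N_kk !row_mxKl !row_mxKr !pair_lin pair_rho pair_r; ring. Qed.

Lemma N_kk_graph l z : l = 1 \/ l = -1 ->
  Nk (graph ((l - k2) / k1) z) = l *: graph ((l - k2) / k1) z.
Proof.
move=> l_sign; rewrite /N_kk /graph row_mxKl row_mxKr scale_row_mx.
congr row_mx; rewrite ?mulmx_lin ?rhoK; apply: pair_ext => j; rewrite ?pair_lin.
  by field.
by case: l_sign => ->; field.
Qed.

Lemma N_kk_eigen l X : Nk X = l *: X -> X = graph ((l - k2) / k1) (lsubmx X).
Proof.
move/(congr1 lsubmx); rewrite /N_kk row_mxKl linearZ /= => NX.
rewrite -[LHS]hsubmxK /graph; congr row_mx.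
rewrite -[rsubmx X]rhoK' -mulmxZl; congr (_ *m _).
apply: pair_ext => j; have := congr1 (fun v => pair v 'e_j) NX; rewrite /= !pair_lin => NXj.
by apply: (eq_lincomb (k := k1^-1) NXj); field.
Qed.

Lemma N_kk_closed l X Y : l = 1 \/ l = -1 ->
  Nk X = l *: X -> Nk Y = l *: Y -> Nk (brD X Y) = l *: brD X Y.
Proof.
by move=> l_sign /N_kk_eigen -> /N_kk_eigen ->; rewrite graph_closed N_kk_graph.
Qed.

Lemma factorizable_N_kk s : s = 1 \/ s = -1 -> factorizable brD (tildeN Nk s).
Proof.
move=> s_sign; apply: factorizable_of_involution s_sign.
- exact: N_kk_lin.
- exact: N_kk_invol.
- by move=> X Y; have := @N_kk_closed 1 X Y (or_introl erefl); rewrite !scale1r.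
- by move=> X Y; have := @N_kk_closed (-1) X Y (or_intror erefl); rewrite !scaleN1r.
- exact: N_kk_skew.
Qed.
End Nkk.
End Graph.
End Double.
End RowVectors.

Unset Implicit Arguments. Set Strict Implicit. Set Printing Implicit Defensive.

Theorem proposition4p10 (R : realFieldType) (n : nat)
  (br : 'rV[R]_n -> 'rV[R]_n -> 'rV[R]_n) (r : 'M[R]_n) :
  is_lie br -> r^T = - r -> cybe br r -> r \in unitmx ->
  (forall mu s : R, (s = 1 \/ s = -1) ->
     factorizable (brD br r) (tildeN (N_mu r mu) s)) /\
  (forall k1 k2 s : R, k1 != 0 -> k2 ^+ 2 != 1 -> (s = 1 \/ s = -1) ->
     factorizable (brD br r) (tildeN (N_kk r k1 k2) s)).
Proof.
move=> [br_linl br_skew _] r_skew r_cybe r_unit.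
split=> [mu s s_sign | k1 k2 s k1_neq0 _ s_sign].
  exact: factorizable_N_mu.
exact: factorizable_N_kk.
Qed.
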